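(* Let $D$ be an arc-colored digraph on $n\geq 3$ vertices. If \[a(D)+c(D)\geq\begin{cases} n(n-1)+\lfloor\frac{n^{2}}{4}\rfloor+3,&\text{if } n=3, 4;\\ n(n-1)+\lfloor\frac{n^{2}}{4}\rfloor+2,&\text{if } n\geq 5, \end{cases}\] then $D$ contains a rainbow triangle.
   Context: All digraphs are finite, without loops or multiple arcs (opposite arcs $xy,yx$ allowed). $a(D)$ is the number of arcs of $D$. An arc-coloring is any map $C:A(D)\to\mathbb{N}$; $c(D)$ is the number of distinct colors used on the arcs. A rainbow triangle is a directed cycle of length 3 whose arcs have pairwise distinct colors. *)

From mathcomp Require Import all_boot.
Set Implicit Arguments. Unset Strict Implicit. Unset Printing Implicit Defensive.

(* A digraph on a finite vertex type V: arc relation, no loops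
   (opposite arcs allowed, no multiple arcs since it is a relation). *)
Definition loopless (V : finType) (A : rel V) : Prop := forall x, ~~ A x x.

Definition arcs (V : finType) (A : rel V) : {set V * V} :=
  [set p : V * V | A p.1 p.2].

Definition num_arcs (V : finType) (A : rel V) : nat := #|arcs A|.

(* c(D): number of distinct colors used on arcs; the coloring C : V -> V -> nat
   is only relevant on arcs. *)
Definition num_colors (V : finType) (A : rel V) (C : V -> V -> nat) : nat :=
  size (undup [seq C p.1 p.2 | p <- enum (arcs A)]).

Definition rainbow_triangle (V : finType) (A : rel V) (C : V -> V -> nat) : Prop :=
  exists x y z : V,
    [/\ x != y, y != z & z != x] /\
    [/\ A x y, A y z & A z x] /\
    [/\ C x y != C y z, C y z != C z x & C z x != C x y].

Definition bound3 (n : nat) : nat :=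
  n * (n - 1) + (n * n) %/ 4 + (if n <= 4 then 3 else 2).

From mathcomp Require Import all_boot zify.

Set Implicit Arguments. Unset Strict Implicit. Unset Printing Implicit Defensive.

(* Write F(S) for the number of arcs plus the number of colours of the
   subdigraph induced by S. Deleting a vertex x loses its degree
   2(|S| - 1) - mis(x), where mis(x) counts the arcs missing at x, and the
   colours private to x (all of whose arcs are incident with x). In a
   rainbow-free digraph on n >= 4 vertices some x has at most
   n/2 + mis(x) private colours: for a vertex v with the most private
   colours, these cannot lie both on in-arcs and on out-arcs of v, and if
   they all lie on out-arcs, the out-neighbours reached by them carry a
   rainbow triangle. Hence F(S) <= F(S - x) + 2(n - 1) + n/2, which
   telescopes to n(n - 1) + n^2/4 + 2 from F <= 10 on three vertices, and
   to one less from F <= 27 on five vertices. Both base cases are checked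
   by an exhaustive search over colourings in which each colour is named by
   its first arc. *)

Lemma leq_card_disjoint (T : finType) (X Y W : {set T}) :
  X \subset W -> Y \subset W -> [disjoint X & Y] -> #|X| + #|Y| <= #|W|.
Proof.
move=> sXW sYW dXY; have [_] := leq_card_setU X Y; rewrite dXY => /eqP <-.
by rewrite subset_leq_card // subUset sXW.
Qed.

Lemma card_setD1 (T : finType) (X : {set T}) x : x \in X -> #|X :\ x| = #|X| - 1.
Proof. by move=> Xx; rewrite (cardsD1 x X) Xx add1n subSS subn0. Qed.

Lemma card_sep_predC (T : finType) (X : {set T}) (P : pred T) :
  #|[set x in X | P x]| + #|[set x in X | ~~ P x]| = #|X|.
Proof.
rewrite -(cardsID [set x | P x] X); congr (_ + _); apply: eq_card => x; rewrite !inE //.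
by rewrite andbC.
Qed.

(** * Arcs, colours and private colours of induced subdigraphs *)

Section Subdigraph.
Variables (V : finType) (A : rel V) (C : V -> V -> nat).
Implicit Types (S : {set V}) (x : V) (c : nat).

Definition rainbow_free : Prop :=
  forall x y z, A x y -> A y z -> A z x -> x != y -> y != z -> z != x ->
  [|| C x y == C y z, C y z == C z x | C z x == C x y].

Definition arcs_in S : {set V * V} := [set p | [&& p.1 \in S, p.2 \in S & A p.1 p.2]].

Definition colors_in S : seq nat := undup [seq C p.1 p.2 | p <- enum (arcs_in S)].

Definition arcs_colors S : nat := #|arcs_in S| + size (colors_in S).

Definition private_to S x c : bool :=
  [forall p in arcs_in S, (C p.1 p.2 == c) ==> (p.1 == x) || (p.2 == x)].

Definition private_colors S x : seq nat := [seq c <- colors_in S | private_to S x c].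

Definition num_private S x : nat := size (private_colors S x).

Definition nonsucc S x : {set V} := [set y in S | (y != x) && ~~ A x y].
Definition nonpred S x : {set V} := [set y in S | (y != x) && ~~ A y x].
Definition missing S x : nat := #|nonsucc S x| + #|nonpred S x|.

Definition degree S x : nat := #|[set y in S | A x y]| + #|[set y in S | A y x]|.

Lemma in_arcs_in S a b : ((a, b) \in arcs_in S) = [&& a \in S, b \in S & A a b].
Proof. by rewrite inE. Qed.

Lemma colors_inP S c :
  reflect (exists a b, [/\ a \in S, b \in S, A a b & C a b = c]) (c \in colors_in S).
Proof.
rewrite mem_undup; apply: (iffP mapP) => [[[a b]]|[a [b [Sa Sb Aab <-]]]].
  by rewrite mem_enum in_arcs_in => /and3P[Sa Sb Aab] ->; exists a, b.
by exists (a, b); rewrite // mem_enum in_arcs_in Sa Sb.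
Qed.

Lemma private_incident S x c a b : c \in private_colors S x ->
  a \in S -> b \in S -> A a b -> C a b = c -> (a == x) || (b == x).
Proof.
rewrite mem_filter => /andP[/forall_inP priv _] Sa Sb Aab Cab.
by have := priv (a, b); rewrite in_arcs_in Sa Sb Aab Cab eqxx; apply.
Qed.

Lemma private_colorsP S x c : c \in private_colors S x ->
  exists a b, [/\ a \in S, b \in S, A a b, C a b = c & (a == x) || (b == x)].
Proof.
move=> priv; have /colors_inP[a [b [Sa Sb Aab Cab]]] : c \in colors_in S.
  by move: priv; rewrite mem_filter => /andP[].
by exists a, b; split; rewrite // (private_incident priv Sa Sb Aab Cab).
Qed.

Lemma mem_private_colors S x c a b : a \in S -> b \in S -> A a b -> C a b = c ->
  (forall a' b', a' \in S -> b' \in S -> A a' b' -> C a' b' = c -> (a' == x) || (b' == x)) ->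
  c \in private_colors S x.
Proof.
move=> Sa Sb Aab Cab priv; rewrite mem_filter; apply/andP; split.
  apply/forall_inP => -[a' b']; rewrite in_arcs_in => /and3P[Sa' Sb' Aab'].
  by apply/implyP => /eqP; apply: priv.
by apply/colors_inP; exists a, b.
Qed.

Lemma num_private_le S x (l : seq nat) :
  {subset private_colors S x <= l} -> num_private S x <= size l.
Proof. by apply: uniq_leq_size; rewrite filter_uniq ?undup_uniq. Qed.

Lemma card_arcs_in_del S x : x \in S ->
  #|arcs_in S| <= #|arcs_in (S :\ x)| + degree S x.
Proof.
move=> Sx.
have arcs_split : arcs_in S \subset arcs_in (S :\ x) :|:
    ([set (x, y) | y in [set y in S | A x y]] :|: [set (y, x) | y in [set y in S | A y x]]).
  apply/subsetP => -[a b]; rewrite in_arcs_in => /and3P[Sa Sb Aab].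
  rewrite !inE; have [<-|ax] := eqVneq a x.
    by rewrite imset_f ?orbT // inE Sb.
  have [<-|bx] := eqVneq b x; first by rewrite [X in _ || (_ || X)]imset_f ?orbT // inE Sa.
  by rewrite /= Sa Sb Aab.
apply: leq_trans (subset_leq_card arcs_split) _.
rewrite (leq_trans (leq_card_setU _ _)) // leq_add2l /degree.
by rewrite (leq_trans (leq_card_setU _ _)) // leq_add // leq_imset_card.
Qed.

Lemma size_colors_in_del S x :
  size (colors_in S) <= size (colors_in (S :\ x)) + num_private S x.
Proof.
rewrite -size_cat; apply: uniq_leq_size; first exact: undup_uniq.
move=> c Sc; rewrite mem_cat orbC; case priv: (c \in private_colors S x) => //=.
move: priv; rewrite mem_filter Sc andbT => /forall_inPn[[a b]].
rewrite in_arcs_in negb_imply => /and3P[Sa Sb Aab] /andP[/eqP Cab /norP[ax bx]].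
by apply/colors_inP; exists a, b; rewrite !inE ax bx Sa Sb.
Qed.

Lemma arcs_colors_del S x : x \in S ->
  arcs_colors S <= arcs_colors (S :\ x) + degree S x + num_private S x.
Proof.
move=> Sx; have := card_arcs_in_del Sx; have := size_colors_in_del S x.
rewrite /arcs_colors; lia.
Qed.

Lemma degree_add_missing S x : loopless A -> x \in S ->
  degree S x + missing S x = (#|S| - 1).*2.
Proof.
move=> loopA Sx.
have split_card (P : pred V) : ~~ P x ->
    #|[set y in S | P y]| + #|[set y in S | (y != x) && ~~ P y]| = #|S :\ x|.
  move=> Px; rewrite -(cardID [set y | P y] (S :\ x)); congr (_ + _); apply: eq_card => y;
    rewrite !inE; case: eqVneq => [->|_]; rewrite ?(negbTE Px) ?andbF //= andbC //.
rewrite /degree /missing addnACA split_card ?split_card ?loopA //.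
by rewrite card_setD1 // addnn.
Qed.

End Subdigraph.

(** * A vertex with few private colours *)

Lemma arc_neq (V : finType) (A : rel V) a b : loopless A -> A a b -> a != b.
Proof. by move=> loopA; apply: contraTneq => ->; apply: loopA. Qed.

Lemma triangle_not_rainbow (V : finType) (A : rel V) C x y z :
  loopless A -> rainbow_free A C -> A x y -> A y z -> A z x ->
  [|| C x y == C y z, C y z == C z x | C z x == C x y].
Proof.
by move=> loopA rfree Axy Ayz Azx; apply: rfree; rewrite // (arc_neq loopA).
Qed.

Section PrivateOnOutArcs.
Variables (V : finType) (A : rel V) (C : V -> V -> nat).
Hypotheses (loopA : loopless A) (rfree : rainbow_free A C).
Variable S : {set V}.
Hypothesis S_ge4 : 4 <= #|S|.
Hypothesis many_private :
  forall x, x \in S -> (#|S| %/ 2).+1 + missing A S x <= num_private A C S x.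
Variable v : V.
Hypothesis Sv : v \in S.
Hypothesis in_arcs_public :
  forall u, u \in S -> A u v -> C u v \notin private_colors A C S v.

Local Notation priv := (private_colors A C S).
Local Notation neq := (arc_neq loopA).
Local Notation triangle := (triangle_not_rainbow loopA rfree).

Let O := [set w in S | A v w && (C v w \in priv v)].
Let Z := (S :\ v) :\: O.

Let O_sub : O \subset S :\ v.
Proof.
by apply/subsetP => w; rewrite !inE => /and3P[Sw Avw _]; rewrite Sw eq_sym neq.
Qed.

Let num_private_v_le : num_private A C S v <= #|O|.
Proof.
rewrite cardE -(size_map (C v)); apply: num_private_le => c privc.
have [a [b [Sa Sb Aab Cab /orP[/eqP av|/eqP bv]]]] := private_colorsP privc; subst.
  by apply/mapP; exists b; rewrite // mem_enum inE Sb Aab privc.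
by have := in_arcs_public Sa Aab; rewrite privc.
Qed.

Let card_O_nonsucc : #|O| + #|nonsucc A S v| <= #|S| - 1.
Proof.
rewrite -(card_setD1 Sv); apply: leq_card_disjoint O_sub _ _.
  by apply/subsetP => w; rewrite !inE => /and3P[Sw wv _]; rewrite Sw wv.
by apply/pred0P => w; rewrite !inE; case: (A v w); rewrite !andbF.
Qed.

Let card_Z_O : #|Z| + #|O| = #|S| - 1.
Proof. by rewrite cardsDS // subnK -?(card_setD1 Sv) // subset_leq_card. Qed.

Let many_private_v :
  (#|S| %/ 2).+1 + (#|nonsucc A S v| + #|nonpred A S v|) <= num_private A C S v.
Proof. exact: many_private. Qed.

(* On the triangle v -> w -> z -> v the colour of vw is private to v while
   that of zv is not. *)
Lemma private_out_transfer w z : w \in O -> z \in S -> z != v ->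
  A w z -> A z v -> C w z = C z v.
Proof.
rewrite inE => /and3P[Sw Avw privw] Sz zv Awz Azv.
case/or3P: (triangle Avw Awz Azv) => /eqP // eqC.
  have := private_incident privw Sw Sz Awz (esym eqC).
  by rewrite (negbTE zv) eq_sym (negbTE (neq Avw)).
by have := in_arcs_public Sz Azv; rewrite eqC privw.
Qed.

Let S_of_O w : w \in O -> w \in S.
Proof. by rewrite inE => /andP[]. Qed.

Lemma private_colors_sink w c : w \in O -> A w v -> c \in priv w ->
  [\/ c = C v w, c = C w v,
      exists2 b, b \in nonpred A S v & A w b /\ c = C w b
    | exists2 a, a \in Z & A a w /\ c = C a w].
Proof.
move=> Ow Awv privc; have Sw := S_of_O Ow.
have [a [b [Sa Sb Aab Cab /orP[/eqP aw|/eqP bw]]]] := private_colorsP privc; subst c.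
  subst a; have [->|bv] := eqVneq b v; first by apply: Or42.
  case Abv : (A b v); last by apply: Or43; exists b; rewrite // !inE Sb bv Abv.
  have := private_incident privc Sb Sv Abv (esym (private_out_transfer Ow Sb bv Aab Abv)).
  by rewrite eq_sym (negbTE (neq Aab)) eq_sym (negbTE (neq Awv)).
subst b; have [->|av] := eqVneq a v; first by apply: Or41.
case Oa : (a \in O); first exact/Or42/(private_out_transfer Oa Sw (neq Awv) Aab Awv).
by apply: Or44; exists a; rewrite // in_setD Oa in_setD1 av Sa.
Qed.

Lemma sink_back_private w : w \in O -> A w v -> C w v \in priv w.
Proof.
move=> Ow Awv; apply: contraT => npriv; have Sw := S_of_O Ow.
have : num_private A C S w <=
    size (C v w :: [seq C w b | b in nonpred A S v] ++ [seq C a w | a in Z]).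
  apply: num_private_le => c privc; rewrite inE mem_cat.
  case: (private_colors_sink Ow Awv privc) => [->|eqc|[b Nb [_ ->]]|[a Za [_ ->]]].
  - by rewrite eqxx.
  - by rewrite -eqc privc in npriv.
  - by rewrite image_f ?orbT.
  - by rewrite [X in _ || (_ || X)]image_f ?orbT.
rewrite /= size_cat !size_image.
have := many_private Sw; rewrite /missing.
move: num_private_v_le many_private_v card_Z_O; lia.
Qed.

Let private_exits w :=
  [set b in nonpred A S v | A w b && (C w b \in priv w) && (C w b != C w v)].

Lemma num_private_sink_le w : w \in O -> A w v ->
  num_private A C S w <= 2 + #|private_exits w| + #|nonsucc A S v|.
Proof.
move=> Ow Awv; have Sw := S_of_O Ow; have privwv := sink_back_private Ow Awv.
have : num_private A C S w <= size
    [:: C v w, C w v & [seq C w b | b in private_exits w] ++ [seq C a w | a in nonsucc A S v]].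
  apply: num_private_le => c privc; rewrite !inE mem_cat.
  case: (private_colors_sink Ow Awv privc) => [->|->|[b Nb [Awb eqc]]|[a Za [Aaw eqc]]].
  - by rewrite eqxx.
  - by rewrite eqxx orbT.
  - have [<-|cwb] := eqVneq (C w b) (C w v); first by rewrite eqc eqxx orbT.
    by rewrite eqc image_f ?orbT // inE Nb Awb cwb -eqc privc.
  have [Sa av] : a \in S /\ a != v by move: Za; rewrite !inE => /and3P[_ ->].
  case Ava : (A v a); last
    by rewrite eqc [X in _ || (_ || (_ || X))]image_f ?orbT // !inE Sa av Ava.
  have vw : (v == w) = false by rewrite eq_sym (negbTE (neq Awv)).
  have aw : (a == w) = false by rewrite (negbTE (neq Aaw)).
  case/or3P: (triangle Aaw Awv Ava) => /eqP eqC; first by rewrite eqc eqC eqxx orbT.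
    by have := private_incident privwv Sv Sa Ava (esym eqC); rewrite vw aw.
  by have := private_incident privc Sv Sa Ava (etrans eqC (esym eqc)); rewrite vw aw.
by rewrite /= size_cat !size_image.
Qed.

Lemma sink_facts w : w \in O -> A w v ->
  [/\ forall z, z \in O -> z != w -> A z w, O = S :\ v & exists b, b \in private_exits w].
Proof.
move=> Ow Awv; have Sw := S_of_O Ow.
have nonsucc_w : #|[set b in nonpred A S v | ~~ A w b]| <= #|nonsucc A S w|.
  apply/subset_leq_card/subsetP => b; rewrite !inE => /andP[/and3P[Sb _ Abv] ->].
  by rewrite Sb andbT; apply: contraNneq Abv => ->.
have nonpred_w : #|[set z in O | (z != w) && ~~ A z w]| <= #|nonpred A S w|.
  by apply/subset_leq_card/subsetP => z; rewrite !inE => /andP[/andP[-> _] ->].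
have exits_le : #|private_exits w| <= #|[set b in nonpred A S v | A w b]|.
  by apply/subset_leq_card/subsetP => b; rewrite !inE => /andP[-> /andP[/andP[-> _] _]].
(* Comparing the private colours of [w] and of [v] leaves no slack. *)
have [no_gap O_big exits_pos] : [/\ #|[set z in O | (z != w) && ~~ A z w]| = 0,
    #|S| - 1 <= #|O| & 0 < #|private_exits w|].
  have := card_sep_predC (nonpred A S v) (A w).
  have := num_private_sink_le Ow Awv; have := many_private Sw; rewrite /missing.
  move: num_private_v_le many_private_v card_O_nonsucc; split; lia.
split; last exact/card_gt0P.
  move=> z Oz zw; apply: contraT => nAzw; move/eqP: no_gap; rewrite cards_eq0.
  by move=> /eqP/setP/(_ z); rewrite in_set0 in_set Oz zw nAzw.
by apply/eqP; rewrite eqEcard O_sub card_setD1.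
Qed.

Lemma private_out_false : False.
Proof.
have [w1 [w2 []]] : exists w1 w2,
    [/\ w1 \in [set w in O | A w v], w2 \in [set w in O | A w v] & w1 != w2].
  apply/card_gt1P; have := card_sep_predC O (A^~ v).
  have : #|[set w in O | ~~ A w v]| <= #|nonpred A S v|.
    apply/subset_leq_card/subsetP => w; rewrite !inE => /andP[/and3P[-> Avw _] ->].
    by rewrite eq_sym neq.
  move: num_private_v_le many_private_v; lia.
move=> /setIdP[Ow1 Aw1v] /setIdP[Ow2 Aw2v] w12.
have [Sw1 Sw2] := (S_of_O Ow1, S_of_O Ow2).
have [to_w1 O_full [z0]] := sink_facts Ow1 Aw1v.
rewrite in_set => /andP[+ /andP[/andP[Aw1z0 privz0] C_ne]].
rewrite inE => /and3P[Sz0 z0v nAz0v].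
have [to_w2 _ _] := sink_facts Ow2 Aw2v.
have Oz0 : z0 \in O by rewrite O_full in_setD1 z0v.
have Az0w2 : A z0 w2 by apply: to_w2; rewrite // eq_sym; apply: contraNneq nAz0v => <-.
have Aw2w1 : A w2 w1 by apply: to_w1; rewrite // eq_sym.
have eq1 := private_out_transfer Oz0 Sw2 (neq Aw2v) Az0w2 Aw2v.
have eq2 := private_out_transfer Ow2 Sw1 (neq Aw1v) Aw2w1 Aw1v.
have off_w1 : (w2 == w1) || (v == w1) = false.
  by rewrite eq_sym (negbTE w12) eq_sym (negbTE (neq Aw1v)).
case/or3P: (triangle Aw1z0 Az0w2 Aw2w1) => /eqP eqC.
- by have := private_incident privz0 Sw2 Sv Aw2v (etrans (esym eq1) (esym eqC)); rewrite off_w1.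
- have := private_incident (sink_back_private Ow1 Aw1v) Sw2 Sv Aw2v.
  by rewrite (etrans (esym eq1) (etrans eqC eq2)) off_w1 => /(_ erefl).
- by rewrite -eqC eq2 eqxx in C_ne.
Qed.

End PrivateOnOutArcs.

Section Reversal.
Variables (V : finType) (A : rel V) (C : V -> V -> nat).

Definition rev_arcs : rel V := fun x y => A y x.
Definition rev_colors (x y : V) : nat := C y x.

Lemma rainbow_free_rev : rainbow_free A C -> rainbow_free rev_arcs rev_colors.
Proof.
move=> rfree x y z Ayx Azy Axz xy yz zx; rewrite /rev_colors.
have := rfree x z y Axz Azy Ayx; rewrite eq_sym zx eq_sym yz eq_sym xy => /(_ isT isT isT).
by case/or3P => /eqP ->; rewrite eqxx ?orbT.
Qed.

Lemma private_colors_rev S x :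
  private_colors rev_arcs rev_colors S x =i private_colors A C S x.
Proof.
move=> c; apply/idP/idP => privc; have [a [b [Sa Sb Aab Cab _]]] := private_colorsP privc.
  apply: (mem_private_colors Sb Sa Aab Cab) => a' b' Sa' Sb' Aab' Cab'.
  by rewrite orbC (private_incident privc Sb' Sa').
apply: (mem_private_colors (A := rev_arcs) (C := rev_colors) Sb Sa Aab Cab).
by move=> a' b' Sa' Sb' Aab' Cab'; rewrite orbC (private_incident privc Sb' Sa').
Qed.

Lemma num_private_rev S x :
  num_private rev_arcs rev_colors S x = num_private A C S x.
Proof.
by apply/perm_size/uniq_perm; rewrite ?filter_uniq ?undup_uniq //; apply: private_colors_rev.
Qed.

Lemma missing_rev S x : missing rev_arcs S x = missing A S x.
Proof. exact: addnC. Qed.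

End Reversal.

Section MostPrivateVertex.
Variables (V : finType) (A : rel V) (C : V -> V -> nat).
Hypotheses (loopA : loopless A) (rfree : rainbow_free A C).
Variable S : {set V}.
Hypothesis S_ge4 : 4 <= #|S|.
Hypothesis many_private :
  forall x, x \in S -> (#|S| %/ 2).+1 + missing A S x <= num_private A C S x.
Variable v : V.
Hypothesis Sv : v \in S.
Hypothesis v_max : forall x, x \in S -> num_private A C S x <= num_private A C S v.

Local Notation priv := (private_colors A C S).
Local Notation neq := (arc_neq loopA).

(* No arc goes back from [O] to [I], so the vertices of [I] and [O] miss too
   many arcs to have as many private colours as [v]. *)
Lemma split_private_false (I O : {set V}) :
  (forall u, u \in I -> [/\ u \in S, A u v & C u v \in priv v]) ->
  (forall w, w \in O -> [/\ w \in S, A v w & C v w \in priv v]) ->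
  (forall u w, u \in I -> w \in O -> C u v != C v w) ->
  num_private A C S v <= #|I| + #|O| -> I != set0 -> O != set0 -> False.
Proof.
move=> I_priv O_priv IO_ne pv_le /set0Pn[u Iu] /set0Pn[w Ow].
have no_back u' w' : u' \in I -> w' \in O -> u' != w' -> ~~ A w' u'.
  move=> Iu' Ow' uw'; apply/negP => Awu.
  have [Su Auv privu] := I_priv u' Iu'; have [Sw Avw privw] := O_priv w' Ow'.
  have off_v : (w' == v) || (u' == v) = false.
    by rewrite eq_sym (negbTE (neq Avw)) (negbTE (neq Auv)).
  case/or3P: (triangle_not_rainbow loopA rfree Auv Avw Awu) => /eqP eqC.
  - by move: (IO_ne u' w' Iu' Ow'); rewrite eqC eqxx.
  - by have := private_incident privw Sw Su Awu (esym eqC); rewrite off_v.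
  - by have := private_incident privu Sw Su Awu eqC; rewrite off_v.
have nonpred_I u' : u' \in I -> #|O :\ u'| <= #|nonpred A S u'|.
  move=> Iu'; have [Su _ _] := I_priv u' Iu'.
  apply/subset_leq_card/subsetP => w'; rewrite !inE => /andP[w'u Ow'].
  by have [-> _ _] := O_priv w' Ow'; rewrite w'u no_back // eq_sym.
have nonsucc_O w' : w' \in O -> #|I :\ w'| <= #|nonsucc A S w'|.
  move=> Ow'; have [Sw _ _] := O_priv w' Ow'.
  apply/subset_leq_card/subsetP => u'; rewrite !inE => /andP[u'w Iu'].
  by have [-> _ _] := I_priv u' Iu'; rewrite u'w no_back.
have IO_disj : [disjoint I & O].
  apply/pred0P => y; apply/negP => /andP[/= Iy Oy]; have [Sy _ _] := I_priv y Iy.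
  have := many_private Sy; rewrite /missing.
  move: (v_max Sy) (nonpred_I y Iy) (nonsucc_O y Oy) (cardsD1 y I) (cardsD1 y O).
  rewrite Iy Oy; lia.
have [Su _ _] := I_priv u Iu; have [Sw _ _] := O_priv w Ow.
have IO_le : #|I| + #|O| <= #|S| - 1.
  rewrite -(card_setD1 Sv); apply: leq_card_disjoint IO_disj.
    by apply/subsetP => y /I_priv[Sy Ayv _]; rewrite in_setD1 Sy neq.
  by apply/subsetP => y /O_priv[Sy Avy _]; rewrite in_setD1 Sy eq_sym neq.
have := many_private Su; have := many_private Sw; rewrite /missing.
move: (v_max Su) (v_max Sw) (nonpred_I u Iu) (nonsucc_O w Ow) (cardsD1 u O) (cardsD1 w I).
rewrite (disjointFr IO_disj Iu) (disjointFl IO_disj Ow); lia.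
Qed.

Let on_in c := [exists u in S, A u v && (C u v == c)].
Let on_out c := [exists w in S, A v w && (C v w == c)].

Lemma private_on_in_or_out c : c \in priv v -> on_in c || on_out c.
Proof.
case/private_colorsP => a [b [Sa Sb Aab <- /orP[]/eqP ?]]; subst.
  by apply/orP; right; apply/exists_inP; exists b; rewrite ?Aab ?eqxx.
by apply/orP; left; apply/exists_inP; exists a; rewrite ?Aab ?eqxx.
Qed.

Lemma private_both_sides_false k l : k \in priv v -> l \in priv v ->
  on_in k -> on_out l -> k != l -> False.
Proof.
move=> privk privl in_k out_l kl.
pose Q c := (c == k) || ~~ on_out c.
have Q_in c : c \in priv v -> Q c -> on_in c.
  move=> privc /orP[/eqP -> //|]; apply: contraNT => not_in.
  by move: (private_on_in_or_out privc); rewrite (negbTE not_in).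
pose I := [set u in S | [&& A u v, C u v \in priv v & Q (C u v)]].
pose O := [set w in S | [&& A v w, C v w \in priv v & ~~ Q (C v w)]].
apply: (@split_private_false I O).
- by move=> u; rewrite inE => /andP[-> /and3P[-> -> _]].
- by move=> w; rewrite inE => /andP[-> /and3P[-> -> _]].
- move=> u w; rewrite !inE => /andP[_ /and3P[_ _ Qu]] /andP[_ /and3P[_ _ nQw]].
  by apply: contraTneq Qu => ->.
- rewrite -(size_image (C^~ v) I) -(size_image (C v) O) -size_cat.
  apply: num_private_le => c privc; rewrite mem_cat.
  have [Qc|nQc] := boolP (Q c).
    have /exists_inP[u Su /andP[Auv /eqP Cuv]] := Q_in c privc Qc.
    by rewrite -Cuv image_f // inE Su Auv Cuv privc Qc.
  have /exists_inP[w Sw /andP[Avw /eqP Cvw]] : on_out c.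
    by move: nQc; rewrite negb_or negbK => /andP[].
  by rewrite -Cvw [X in _ || X]image_f ?orbT // inE Sw Avw Cvw privc nQc.
- have /exists_inP[u Su /andP[Auv /eqP Cuv]] := in_k.
  by apply/set0Pn; exists u; rewrite inE Su Auv Cuv privk /Q eqxx.
- have /exists_inP[w Sw /andP[Avw /eqP Cvw]] := out_l.
  apply/set0Pn; exists w; rewrite inE Sw Avw Cvw privl /Q negb_or negbK (eq_sym l) kl.
  by apply/exists_inP; exists w; rewrite ?Avw ?Cvw ?eqxx.
Qed.

Lemma private_one_side :
  (forall u, u \in S -> A u v -> C u v \notin priv v) \/
  (forall w, w \in S -> A v w -> C v w \notin priv v).
Proof.
have [in_public|] := boolP [forall u in S, A u v ==> (C u v \notin priv v)].
  by left=> u Su Auv; move/forall_inP/(_ u Su)/implyP: in_public; apply.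
have [out_public|] := boolP [forall w in S, A v w ==> (C v w \notin priv v)].
  by move=> _; right=> w Sw Avw; move/forall_inP/(_ w Sw)/implyP: out_public; apply.
move=> /forall_inPn[w0 Sw0]; rewrite negb_imply negbK => /andP[Avw0 privw0].
move=> /forall_inPn[u0 Su0]; rewrite negb_imply negbK => /andP[Au0v privu0].
exfalso.
have in0 : on_in (C u0 v) by apply/exists_inP; exists u0; rewrite ?Au0v ?eqxx.
have out0 : on_out (C v w0) by apply/exists_inP; exists w0; rewrite ?Avw0 ?eqxx.
have [eq0|] := eqVneq (C u0 v) (C v w0); last exact: private_both_sides_false.
have [c privc cne] : exists2 c, c \in priv v & c != C u0 v.
  apply/hasP; apply: contraT; rewrite -all_predC => /allP all0.
  have : num_private A C S v <= size [:: C u0 v].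
    by apply: num_private_le => c /all0 /=; rewrite negbK mem_seq1.
  by move=> /= p_le; have := many_private Sv; lia.
case/orP: (private_on_in_or_out privc) => [in_c|out_c].
  by apply: (private_both_sides_false privc privw0 in_c out0); rewrite -eq0.
by apply: (private_both_sides_false privu0 privc in0 out_c); rewrite eq_sym.
Qed.

End MostPrivateVertex.

Lemma exists_few_private (V : finType) (A : rel V) (C : V -> V -> nat) (S : {set V}) :
  loopless A -> rainbow_free A C -> 4 <= #|S| ->
  exists2 x, x \in S & num_private A C S x <= #|S| %/ 2 + missing A S x.
Proof.
move=> loopA rfree S_ge4.
have [/exists_inP[x Sx few]|/exists_inPn many] :=
  boolP [exists x in S, num_private A C S x <= #|S| %/ 2 + missing A S x].
  by exists x.
exfalso.
have many_private x : x \in S -> (#|S| %/ 2).+1 + missing A S x <= num_private A C S x.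
  by move=> Sx; have := many x Sx; rewrite -ltnNge addSn.
have [x0 Sx0] : exists x0, x0 \in S by apply/card_gt0P; lia.
have [v Sv v_max] := arg_maxnP (num_private A C S) Sx0.
have [in_public|out_public] := private_one_side loopA rfree S_ge4 many_private Sv v_max.
  exact: (private_out_false loopA rfree S_ge4 many_private Sv in_public).
apply: (private_out_false (A := rev_arcs A) (C := rev_colors C) loopA
         (rainbow_free_rev rfree) S_ge4 _ Sv).
  by move=> x Sx; rewrite num_private_rev missing_rev; apply: many_private.
by move=> u Su Avu; rewrite private_colors_rev; apply: out_public.
Qed.

(** * Exhaustive search over colour codes *)

Definition rainbow3 (a b c : option nat) : bool :=
  if (a, b, c) is (Some x, Some y, Some z) then [&& x != y, y != z & z != x] else false.

Definition rainbow_at (s : seq (option nat)) (t : nat * nat * nat) : bool :=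
  rainbow3 (nth None s t.1.1) (nth None s t.1.2) (nth None s t.2).

Definition rainbow_freeb (T : seq (nat * nat * nat)) (s : seq (option nat)) : bool :=
  ~~ has (rainbow_at s) T.

(* A code has one entry per arc slot: [None] for a missing arc, [Some c] for
   an arc of colour [c]. In a canonical code every colour is the index of its
   first slot, its leader, so [code_weight] counts arcs plus colours. *)
Definition leaders (s : seq (option nat)) : seq nat :=
  [seq r <- iota 0 (size s) | nth None s r == Some r].

Definition code_weight (s : seq (option nat)) : nat := count isSome s + size (leaders s).

Definition canonical (s : seq (option nat)) : bool :=
  all (fun i => if nth None s i is Some r then (r <= i) && (nth None s r == Some r) else true)
    (iota 0 (size s)).

Definition next_entries (s : seq (option nat)) : seq (option nat) :=
  None :: Some (size s) :: [seq Some r | r <- leaders s].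

(* Extensions of [pre] by [fuel] entries; a branch is cut as soon as even an
   arc with a new colour in every remaining slot cannot reach [target]. *)
Fixpoint search T target fuel (pre : seq (option nat)) : seq (seq (option nat)) :=
  if ~~ rainbow_freeb T pre then [::] else
  if fuel is f.+1 then
    if code_weight pre + fuel.*2 < target then [::]
    else flatten [seq search T target f (rcons pre o) | o <- next_entries pre]
  else if target <= code_weight pre then [:: pre] else [::].

Lemma nth_take_None (s : seq (option nat)) k i :
  nth None (take k s) i = if i < k then nth None s i else None.
Proof.
case: ltnP => ik; first by rewrite nth_take.
by rewrite nth_default // size_take; case: ltnP => // sk; apply: leq_trans ik.
Qed.

Lemma rainbow_freeb_take T s k : rainbow_freeb T s -> rainbow_freeb T (take k s).
Proof.
apply: contra => /hasP[t Tt]; rewrite /rainbow_at !nth_take_None => rb.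
apply/hasP; exists t => //; move: rb; rewrite /rainbow_at.
move: (nth None s t.1.1) (nth None s t.1.2) (nth None s t.2) => [a|] [b|] [c|];
  by do 3 case: (_ < k).
Qed.

Lemma code_weight_take s k : code_weight s <= code_weight (take k s) + (size s - k).*2.
Proof.
rewrite /code_weight -addnn addnACA; apply: leq_add.
  rewrite -{1}(cat_take_drop k s) count_cat leq_add2l.
  by rewrite (leq_trans (count_size _ _)) // size_drop.
have [ks|sk] := leqP (size s) k; first by rewrite take_oversize // leq_addr.
rewrite /leaders size_take sk -{1}(subnKC (ltnW sk)) iotaD filter_cat size_cat add0n.
apply: leq_add; last by rewrite size_filter (leq_trans (count_size _ _)) ?size_iota.
rewrite (eq_in_filter (a2 := fun r => nth None (take k s) r == Some r)) //.
by move=> r; rewrite mem_iota add0n => /andP[_ rk]; rewrite nth_take.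
Qed.

Lemma canonical_next_entry s k : canonical s -> k < size s ->
  nth None s k \in next_entries (take k s).
Proof.
move=> /allP can_s ks; have := can_s k; rewrite mem_iota add0n ks => /(_ isT).
rewrite /next_entries !inE size_take ks.
case: (nth None s k) => [r|//] /andP[]; rewrite leq_eqVlt => /orP[/eqP->|rk] sr.
  by rewrite eqxx orbT.
by rewrite (mem_map Some_inj) mem_filter mem_iota size_take ks nth_take // sr rk !orbT.
Qed.

Lemma search_unpruned T target f pre :
  rainbow_freeb T pre -> target <= code_weight pre + f.+1.*2 ->
  search T target f.+1 pre = flatten [seq search T target f (rcons pre o) | o <- next_entries pre].
Proof. by move=> /= -> wpre; rewrite ltnNge wpre. Qed.

Lemma search_complete T target (q : seq (option nat)) :
  canonical q -> rainbow_freeb T q -> target <= code_weight q ->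
  forall f k, k + f = size q -> q \in search T target f (take k q).
Proof.
move=> can_q rf_q wq; elim=> [|f IHf] k kf.
  by rewrite addn0 in kf; rewrite kf take_size /= rf_q wq mem_seq1.
have ks : k < size q by rewrite -kf addnS ltnS leq_addr.
have wk : target <= code_weight (take k q) + f.+1.*2.
  by rewrite (leq_trans wq) // (leq_trans (code_weight_take q k)) // -kf addKn.
rewrite search_unpruned ?rainbow_freeb_take //.
apply/flattenP; exists (search T target f (rcons (take k q) (nth None q k))).
  by apply/mapP; exists (nth None q k); rewrite ?canonical_next_entry.
by rewrite -take_nth //; apply: IHf; rewrite addSnnS.
Qed.

Definition canon (s : seq (option nat)) : seq (option nat) :=
  [seq omap (fun c => index (Some c) s) o | o <- s].

Lemma nth_canon s i :
  nth None (canon s) i = omap (fun c => index (Some c) s) (nth None s i).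
Proof.
have [lt_is|le_si] := ltnP i (size s); first by rewrite (nth_map None).
by rewrite !nth_default ?size_map.
Qed.

Lemma canonical_canon s : canonical (canon s).
Proof.
apply/allP => i; rewrite mem_iota size_map => /andP[_ lt_is]; rewrite nth_canon.
case si: (nth None s i) => [c|//] /=.
have sc : Some c \in s by rewrite -si mem_nth.
rewrite nth_canon (nth_index None sc) /= eqxx andbT -si.
exact: index_nth.
Qed.

Lemma count_canon s : count isSome (canon s) = count isSome s.
Proof. by rewrite count_map; apply: eq_count => -[]. Qed.

Lemma size_leaders_canon s : size (leaders (canon s)) = size (undup (filter isSome s)).
Proof.
have leaderP r : r \in leaders (canon s) -> exists c, nth None s r = Some c /\ index (Some c) s = r.
  by rewrite mem_filter nth_canon => /andP[]; case: (nth None s r) => // c /eqP[<-]; exists c.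
rewrite -(size_map (nth None s)); apply/perm_size/uniq_perm; last 1 first.
- move=> o; rewrite mem_undup mem_filter; apply/mapP/andP => [[r lr ->]|[]].
    have [c [src _]] := leaderP r lr; rewrite src; split=> //; rewrite -src mem_nth //.
    by move: lr; rewrite mem_filter mem_iota size_map => /and3P[_ _].
  case: o => [c|//] _ sc; exists (index (Some c) s); last by rewrite nth_index.
  by rewrite mem_filter mem_iota size_map index_mem sc nth_canon nth_index //= andbT.
- rewrite map_inj_in_uniq ?filter_uniq ?iota_uniq // => r1 r2 l1 l2 eq12.
  have [c1 [e1 <-]] := leaderP r1 l1; have [c2 [e2 <-]] := leaderP r2 l2.
  by rewrite -e1 -e2 eq12.
- exact: undup_uniq.
Qed.

Lemma code_weight_canon s :
  code_weight (canon s) = count isSome s + size (undup (filter isSome s)).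
Proof. by rewrite /code_weight count_canon size_leaders_canon. Qed.

Lemma rainbow_freeb_canon T s : rainbow_freeb T s -> rainbow_freeb T (canon s).
Proof.
apply: contra => /hasP[t Tt]; rewrite /rainbow_at !nth_canon => rb.
apply/hasP; exists t => //; move: rb; rewrite /rainbow_at.
move: (nth None s t.1.1) (nth None s t.1.2) (nth None s t.2) => [a|] [b|] [c|] //=.
case/and3P=> ab bc ca; apply/and3P.
by split; [apply: contra_neq ab | apply: contra_neq bc | apply: contra_neq ca] => ->.
Qed.

Lemma take_canon k s : take k (canon s) = canon (take k s).
Proof.
rewrite /canon -map_take; apply/eq_in_map => -[c sc|//] /=.
by rewrite -[in LHS](cat_take_drop k s) index_cat sc.
Qed.

(** * The colour code of a digraph *)

(* The slots of vertex [m] come after those of [0 .. m-1], so the code of a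
   vertex sequence is a prefix of the code of any extension of it. *)
Definition new_slots (m : nat) : seq (nat * nat) :=
  [seq if b then (k, m) else (m, k) | k <- iota 0 m, b <- [:: true; false]].

Fixpoint slots (n : nat) : seq (nat * nat) :=
  if n is m.+1 then slots m ++ new_slots m else [::].

Lemma mem_new_slots m i j :
  ((i, j) \in new_slots m) = ((j == m) && (i < m)) || ((i == m) && (j < m)).
Proof.
apply/allpairsP/idP => [[[k []] [/= + _ [-> ->]]]|].
- by rewrite mem_iota => /andP[_ km]; rewrite eqxx km.
- by rewrite mem_iota => /andP[_ km]; rewrite eqxx km orbT.
by case/orP=> /andP[/eqP-> km]; [exists (i, true) | exists (j, false)]; rewrite mem_iota km.
Qed.

Lemma mem_slots n i j : ((i, j) \in slots n) = [&& i < n, j < n & i != j].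
Proof.
by elim: n => [|n IHn] //=; rewrite mem_cat IHn mem_new_slots; lia.
Qed.

Lemma uniq_slots n : uniq (slots n).
Proof.
elim: n => //= n IHn; rewrite cat_uniq IHn /=; apply/andP; split.
  by apply/hasPn => -[i j]; rewrite mem_new_slots mem_slots; lia.
apply: allpairs_uniq; rewrite ?iota_uniq // => ? ?.
move=> /allpairsP[[k b] [+ _ ->]] /allpairsP[[k' b'] [+ _ ->]].
rewrite /= !mem_iota => /andP[_ lt_k] /andP[_ lt_k'].
by case: b b' => -[] [] *; subst; rewrite ?ltnn in lt_k lt_k'.
Qed.

Definition triples (n : nat) : seq (nat * nat * nat) :=
  [seq (ij, k) | ij <- [seq (i, j) | i <- iota 0 n, j <- iota 0 n], k <- iota 0 n].

Lemma mem_triples n t : t \in triples n -> [&& t.1.1 < n, t.1.2 < n & t.2 < n].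
Proof.
case/allpairsP => -[ij k] [/allpairsP[[i j] [+ + ->]] + ->].
by rewrite !mem_iota => /andP[_ ->] /andP[_ ->] /andP[_ ->].
Qed.

Definition triangle_slots (n : nat) : seq (nat * nat * nat) :=
  let slot i j := index (i, j) (slots n) in
  [seq (slot t.1.1 t.1.2, slot t.1.2 t.2, slot t.2 t.1.1)
  | t <- triples n & [&& t.1.1 != t.1.2, t.1.2 != t.2 & t.2 != t.1.1]].

Section DigraphCode.
Variables (V : finType) (A : rel V) (C : V -> V -> nat) (x0 : V).
Implicit Type sv : seq V.

Definition vertex_pairs sv : seq (V * V) :=
  [seq (nth x0 sv ij.1, nth x0 sv ij.2) | ij <- slots (size sv)].

Definition arc_entry (p : V * V) : option nat := if A p.1 p.2 then Some (C p.1 p.2) else None.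

Definition digraph_code sv : seq (option nat) := map arc_entry (vertex_pairs sv).

Lemma nth_digraph_code sv i j : (i, j) \in slots (size sv) ->
  nth None (digraph_code sv) (index (i, j) (slots (size sv))) =
  arc_entry (nth x0 sv i, nth x0 sv j).
Proof.
by move=> ij; rewrite (nth_map (x0, x0)) ?(nth_map (0, 0)) ?size_map ?index_mem ?nth_index.
Qed.

Lemma take_digraph_code_rcons sv x :
  take (size (slots (size sv))) (digraph_code (rcons sv x)) = digraph_code sv.
Proof.
rewrite /digraph_code /vertex_pairs size_rcons /= !map_cat take_size_cat ?size_map //.
congr (map _ _); apply/eq_in_map => -[i j]; rewrite mem_slots => /and3P[si sj _].
by rewrite /= !nth_rcons si sj.
Qed.

Variables (S : {set V}) (sv : seq V).
Hypotheses (loopA : loopless A) (uniq_sv : uniq sv) (S_sv : S =i sv).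

Lemma mem_vertex_pairs a b :
  ((a, b) \in vertex_pairs sv) = [&& a \in S, b \in S & a != b].
Proof.
rewrite !S_sv; apply/mapP/and3P => [[[i j]]|[sva svb ab]].
  rewrite mem_slots => /and3P[si sj ij] [-> ->].
  by rewrite !mem_nth // nth_uniq.
exists (index a sv, index b sv); last by rewrite /= !nth_index.
by rewrite mem_slots !index_mem sva svb (contra_neq (index_inj a sva svb) ab).
Qed.

Lemma uniq_vertex_pairs : uniq (vertex_pairs sv).
Proof.
rewrite map_inj_in_uniq ?uniq_slots // => -[i j] [i' j'].
rewrite !mem_slots => /and3P[si sj _] /and3P[si' sj' _] [] /eqP + /eqP.
by rewrite !nth_uniq // => /eqP-> /eqP->.
Qed.

Lemma count_digraph_code : count isSome (digraph_code sv) = #|arcs_in A S|.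
Proof.
rewrite count_map -size_filter; set arcs := filter _ _.
have /card_uniqP<- : uniq arcs by rewrite filter_uniq ?uniq_vertex_pairs.
apply: eq_card => -[a b].
rewrite mem_filter in_arcs_in mem_vertex_pairs /preim /arc_entry /=.
by case Aab: (A a b); rewrite ?andbF // (arc_neq loopA Aab) andbT.
Qed.

Lemma colors_digraph_code :
  size (undup (filter isSome (digraph_code sv))) = size (colors_in A C S).
Proof.
rewrite -(size_map Some (colors_in A C S)); apply: perm_size; apply: uniq_perm.
- exact: undup_uniq.
- by rewrite (map_inj_uniq Some_inj) undup_uniq.
move=> o; rewrite mem_undup mem_filter.
apply/andP/mapP => [[]|[c /colors_inP[a [b [Sa Sb Aab <-]]] ->]].
  case: o => [c|//] _ /mapP[[a b]]; rewrite mem_vertex_pairs /arc_entry => /and3P[Sa Sb _] /=.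
  by case: ifP => // Aab [->]; exists (C a b) => //; apply/colors_inP; exists a, b.
split=> //; apply/mapP; exists (a, b); last by rewrite /arc_entry /= Aab.
by rewrite mem_vertex_pairs Sa Sb (arc_neq loopA Aab).
Qed.

Lemma code_weight_digraph_code :
  code_weight (canon (digraph_code sv)) = arcs_colors A C S.
Proof. by rewrite code_weight_canon count_digraph_code colors_digraph_code. Qed.

Lemma rainbow_freeb_digraph_code :
  rainbow_free A C -> rainbow_freeb (triangle_slots (size sv)) (digraph_code sv).
Proof.
move=> rfree; apply/hasPn => t /mapP[[[i j] k]].
rewrite mem_filter => /andP[/and3P[ij jk ki] /mem_triples/and3P[si sj sk]] ->.
have slot_ok u w : u < size sv -> w < size sv -> u != w -> (u, w) \in slots (size sv).
  by move=> su sw uw; rewrite mem_slots su sw uw.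
rewrite /rainbow_at /= !nth_digraph_code ?slot_ok //.
have nth_neq u w : u < size sv -> w < size sv -> u != w -> nth x0 sv u != nth x0 sv w.
  by move=> su sw; rewrite nth_uniq.
rewrite /arc_entry /=; case: ifP => // Aij; case: ifP => // Ajk; case: ifP => //= Aki.
have := rfree _ _ _ Aij Ajk Aki
  (nth_neq _ _ si sj ij) (nth_neq _ _ sj sk jk) (nth_neq _ _ sk si ki).
by case/or3P => /eqP ->; rewrite /rainbow3 /= eqxx ?andbF.
Qed.

End DigraphCode.

Lemma search3_nil : search (triangle_slots 3) 11 6 [::] = [::].
Proof. by vm_compute. Qed.

Lemma search45_nil :
  all (fun p => search (triangle_slots 5) 28 8 p == [::]) (search (triangle_slots 4) 18 12 [::]).
Proof. by vm_compute. Qed.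

Section Bounds.
Variables (V : finType) (A : rel V) (C : V -> V -> nat).
Hypotheses (loopA : loopless A) (rfree : rainbow_free A C).

Lemma digraph_code_in_search (x0 : V) (S : {set V}) (sv : seq V) target f k :
  uniq sv -> S =i sv -> target <= arcs_colors A C S -> k + f = size (slots (size sv)) ->
  canon (digraph_code A C x0 sv) \in
    search (triangle_slots (size sv)) target f (take k (canon (digraph_code A C x0 sv))).
Proof.
move=> uniq_sv S_sv big kf; apply: search_complete.
- exact: canonical_canon.
- exact/rainbow_freeb_canon/rainbow_freeb_digraph_code.
- by rewrite (code_weight_digraph_code _ _ loopA uniq_sv S_sv).
- by rewrite !size_map.
Qed.

Lemma arcs_colors_step (S : {set V}) : 4 <= #|S| -> exists2 x, x \in S &
  arcs_colors A C S <= arcs_colors A C (S :\ x) + (#|S| - 1).*2 + #|S| %/ 2.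
Proof.
move=> S_ge4; have [x Sx few] := exists_few_private loopA rfree S_ge4.
by exists x => //; have := arcs_colors_del A C Sx; have := degree_add_missing loopA Sx; lia.
Qed.

Lemma arcs_colors_card3 (S : {set V}) : #|S| = 3 -> arcs_colors A C S <= 10.
Proof.
move=> S3; rewrite leqNgt; apply/negP => big.
have [x0 _] : exists x0, x0 \in S by apply/card_gt0P; rewrite S3.
have := digraph_code_in_search x0 (enum_uniq S) (fun x => esym (mem_enum _ x)) big
  (k := 0) (f := 6).
by rewrite -cardE S3 take0 search3_nil => /(_ erefl).
Qed.

Lemma arcs_colors_card5 (S : {set V}) : #|S| = 5 -> arcs_colors A C S <= 27.
Proof.
move=> S5; rewrite leqNgt; apply/negP => big.
have S_ge4 : 4 <= #|S| by rewrite S5.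
have [x Sx step] := arcs_colors_step S_ge4.
have big4 : 18 <= arcs_colors A C (S :\ x) by move: step; rewrite S5; lia.
pose sv := enum (S :\ x).
have sv4 : size sv = 4 by rewrite -cardE card_setD1 // S5.
have code4 : canon (digraph_code A C x sv) \in search (triangle_slots 4) 18 12 [::].
  have := digraph_code_in_search x (enum_uniq (S :\ x)) (fun y => esym (mem_enum _ y)) big4.
  by rewrite sv4 => /(_ 12 0 erefl); rewrite take0.
have code5 : canon (digraph_code A C x (rcons sv x)) \in
    search (triangle_slots 5) 28 8 (canon (digraph_code A C x sv)).
  have uniq_sv5 : uniq (rcons sv x) by rewrite rcons_uniq mem_enum !inE eqxx enum_uniq.
  have S_sv5 : S =i rcons sv x.
    by move=> y; rewrite mem_rcons inE mem_enum in_setD1; case: eqVneq => [->|].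
  have := digraph_code_in_search x uniq_sv5 S_sv5 big (k := size (slots (size sv))) (f := 8).
  by rewrite take_canon take_digraph_code_rcons size_rcons sv4; apply.
by move/allP: search45_nil => /(_ _ code4)/eqP nil5; rewrite nil5 in code5.
Qed.

Lemma arcs_colors_le_from n0 (f : nat -> nat) :
  3 <= n0 -> (forall S : {set V}, #|S| = n0 -> arcs_colors A C S <= f n0) ->
  (forall n, n0 <= n -> f n + n.*2 + n.+1 %/ 2 <= f n.+1) ->
  forall S : {set V}, n0 <= #|S| -> arcs_colors A C S <= f #|S|.
Proof.
move=> n0_ge3 base grow.
suff bound n (S : {set V}) : #|S| = n -> n0 <= n -> arcs_colors A C S <= f n.
  by move=> S; apply: bound.
elim: n S => [|n IHn] S Sn le_n0; first by lia.
have [lt_n0|gt_n0|eq_n0] := ltngtP n0 n.+1; [|lia|by rewrite -eq_n0 base // Sn eq_n0].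
have S_ge4 : 4 <= #|S| by lia.
have [x Sx step] := arcs_colors_step S_ge4.
have Sx_n : #|S :\ x| = n by rewrite card_setD1 // Sn subn1.
have := IHn _ Sx_n lt_n0; have := grow n lt_n0; rewrite Sn in step; lia.
Qed.

Definition ac_bound (n : nat) : nat := n * (n - 1) + n * n %/ 4 + 2.

Lemma ac_bound_grow n : 3 <= n -> ac_bound n + n.*2 + n.+1 %/ 2 = ac_bound n.+1.
Proof. by rewrite /ac_bound; nia. Qed.

Lemma arcs_colors_le (S : {set V}) : 3 <= #|S| -> arcs_colors A C S <= ac_bound #|S|.
Proof.
apply: arcs_colors_le_from => // [T T3|n n_ge3]; last by rewrite ac_bound_grow.
by rewrite arcs_colors_card3.
Qed.

Lemma arcs_colors_le_pred (S : {set V}) :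
  5 <= #|S| -> arcs_colors A C S <= (ac_bound #|S|).-1.
Proof.
apply: (@arcs_colors_le_from 5 (fun n => (ac_bound n).-1)) => // [T T5|n n_ge5].
  by rewrite arcs_colors_card5.
have : 0 < ac_bound n by rewrite /ac_bound addn2.
by rewrite -ac_bound_grow ?(leq_trans _ n_ge5) //; lia.
Qed.

End Bounds.

Lemma rainbow_triangle_or_free (V : finType) (A : rel V) (C : V -> V -> nat) :
  rainbow_triangle A C \/ rainbow_free A C.
Proof.
have [/existsP[x /existsP[y /existsP[z /and3P[/and3P[xy yz zx] /and3P[Axy Ayz Azx] rb]]]]|none]
  := boolP [exists x, exists y, exists z, [&& [&& x != y, y != z & z != x],
              [&& A x y, A y z & A z x] & ~~ [|| C x y == C y z, C y z == C z x | C z x == C x y]]].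
  by left; exists x, y, z; move: rb; rewrite !negb_or => /and3P[? ? ?].
right=> x y z Axy Ayz Azx xy yz zx; apply: contraNT none => rb.
apply/existsP; exists x; apply/existsP; exists y; apply/existsP; exists z.
by rewrite xy yz zx Axy Ayz Azx.
Qed.

Theorem theorem3 (V : finType) (A : rel V) (C : V -> V -> nat) :
  loopless A -> 3 <= #|V| ->
  bound3 #|V| <= num_arcs A + num_colors A C ->
  rainbow_triangle A C.
Proof.
move=> loopA V_ge3 big; have [//|rfree] := rainbow_triangle_or_free A C; exfalso.
have arcs_setT : arcs_in A [set: V] = arcs A by apply/setP => -[a b]; rewrite !inE.
have whole : arcs_colors A C [set: V] = num_arcs A + num_colors A C.
  by rewrite /arcs_colors /colors_in arcs_setT.
move: big; rewrite /bound3 -whole -cardsT in V_ge3 *.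
case: (leqP #|[set: V]| 4) => [V_le4|V_gt4].
  by have := arcs_colors_le loopA rfree V_ge3; rewrite /ac_bound; lia.
by have := arcs_colors_le_pred loopA rfree V_gt4; rewrite /ac_bound; lia.
Qed.
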